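(* Let $1\le i\le n-1$. The map $\mathfrak S_i(1243,2143)\times\mathfrak S_{n-i}(1243,2143)\to\mathfrak S_n(1243,2143)$, $(\pi_1,\pi_2)\mapsto\pi_1*\pi_2$, is a bijection onto the set of $\pi\in\mathfrak S_n(1243,2143)$ with $\pi(i+1)=n$. Moreover, for all $k\ge1$, $\pi_1\in\mathfrak S_i(1243,2143)$, $\pi_2\in\mathfrak S_{n-i}(1243,2143)$, $$\tau_k(\pi_1*\pi_2)=\tau_k(\pi_1)+\tau_{k-1}(\pi_1)+\tau_k(\pi_2).$$
   Context: $\mathfrak S_m(R)$ is the set of permutations of $\{1,\dots,m\}$ avoiding every pattern in $R$ (no subsequence with the same relative order as a pattern). $\tau_k(\pi)$ is the number of increasing subsequences of length $k$ in $\pi$ for $k\ge1$, and $\tau_0(\pi)=0$. For nonempty permutations $\pi_1,\pi_2$: let $\tilde\pi_1$ be obtained by adding $|\pi_2|-1$ to every entry of $\pi_1$ and then replacing the entry equal to $|\pi_2|$ by the first entry of $\pi_2$; let $\tilde\pi_2$ be $\pi_2$ with its first entry deleted; then $\pi_1*\pi_2=\tilde\pi_1,\ N,\ \tilde\pi_2$ (concatenation) where $N=|\pi_1|+|\pi_2|$. E.g. $3124*15342=716895342$. *)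

From mathcomp Require Import all_boot.
Set Implicit Arguments. Unset Strict Implicit. Unset Printing Implicit Defensive.

Definition is_perm (m : nat) (s : seq nat) : Prop := perm_eq s (iota 1 m).

Definition order_iso (t p : seq nat) : bool :=
  (size t == size p) &&
  [forall i : 'I_(size p), forall j : 'I_(size p),
     (nth 0 t i < nth 0 t j) == (nth 0 p i < nth 0 p j)].

Definition contains (s p : seq nat) : Prop :=
  exists t : seq nat, subseq t s /\ order_iso t p.

Definition avoids (s : seq nat) (R : seq (seq nat)) : Prop :=
  forall p, p \in R -> ~ contains s p.

Definition in_Sav (m : nat) (R : seq (seq nat)) (s : seq nat) : Prop :=
  is_perm m s /\ avoids s R.

(* tau_k: number of increasing subsequences of length k (k >= 1), tau_0 = 0.
   A subsequence is given by its set of positions. *)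
Definition tau (k : nat) (s : seq nat) : nat :=
  if k == 0 then 0 else
  #|[set S : {set 'I_(size s)} | (#|S| == k) &&
      [forall i in S, forall j in S, (i < j) ==> (nth 0 s i < nth 0 s j)]]|.

Definition star (p1 p2 : seq nat) : seq nat :=
  let b := size p2 in
  map (fun x => let y := x + (b - 1) in if y == b then head 0 p2 else y) p1
  ++ (size p1 + size p2) :: behead p2.

Definition R12 : seq (seq nat) := [:: [:: 1; 2; 4; 3]; [:: 2; 1; 4; 3]].

From mathcomp Require Import all_boot zify.
Set Implicit Arguments. Unset Strict Implicit. Unset Printing Implicit Defensive.

(* Write N = i + m, h for the first entry of p2 and C for the rest of p2.  Then
   p1 * p2 = A ++ N :: C, where A is p1 relabelled so that its entry 1 becomes h
   and every other entry lands strictly between m and N.  An occurrence of 1243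
   or 2143 is a pair a, b below d followed by c > d; in A ++ N :: C it either
   lies inside A, or uses at most h from A and then lies inside h :: C = p2.
   Conversely, if an avoiding permutation has N in position i + 1, two entries
   x, y before N exceeding an entry z after N would give the occurrence x y N z,
   so every entry before N except the least one, h, exceeds every entry after N;
   this recovers p2 = h :: C and p1.  Finally an increasing subsequence of
   A ++ N :: C lies in A, ends with N, lies in C, or is h followed by an
   increasing subsequence of C above h, which accounts for
   tau_k(p1) + tau_(k-1)(p1) + tau_k(p2). *)

Fixpoint n_incr_above (k lo : nat) (s : seq nat) : nat :=
  match k, s with
  | 0, _ => 1
  | _.+1, [::] => 0
  | k'.+1, x :: s' => (if lo < x then n_incr_above k' x s' else 0) + n_incr_above k lo s'
  end.

Lemma n_incr_above0 lo s : n_incr_above 0 lo s = 1.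
Proof. by case: s. Qed.

Lemma n_incr_above_le k lo s : {in s, forall x, x <= lo} -> n_incr_above k.+1 lo s = 0.
Proof.
elim: s => [//|x s IHs] s_le /=.
rewrite IHs => [|y ys]; last by apply: s_le; rewrite inE ys orbT.
by rewrite ltnNge s_le ?mem_head.
Qed.

Lemma n_incr_above_map (P : pred nat) (f : nat -> nat) k lo lo' s :
  {in P &, {mono f : x y / x < y}} -> all P s ->
  {in P, forall x, (lo < x) = (lo' < f x)} ->
  n_incr_above k lo s = n_incr_above k lo' (map f s).
Proof.
move=> f_mono; elim: s k lo lo' => [|x s IHs] [|k] lo lo' //= /andP [Px Ps] lo_lo'.
rewrite -lo_lo' //; congr (_ + _); last exact: IHs.
by case: ifP => // _; apply: IHs => // y Py; rewrite f_mono.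
Qed.

Definition increasing_on s (S : {set 'I_(size s)}) : bool :=
  [forall i in S, forall j in S, (i < j) ==> (nth 0 s i < nth 0 s j)].

Definition above_on lo s (S : {set 'I_(size s)}) : bool :=
  [forall i in S, lo < nth 0 s i].

Definition card_incr_above k lo s : nat :=
  \sum_(S : {set 'I_(size s)}) ((#|S| == k) && increasing_on S && above_on lo S : nat).

Lemma increasing_onP s (S : {set 'I_(size s)}) :
  reflect {in S &, forall i j : 'I_(size s), i < j -> nth 0 s i < nth 0 s j} (increasing_on S).
Proof.
apply: (iffP forallP) => [S_incr i j iS jS|S_incr i].
  by move: (S_incr i); rewrite iS => /forallP /(_ j); rewrite jS /= => /implyP; apply.
by apply/implyP => iS; apply/forallP => j; apply/implyP => jS; apply/implyP; apply: S_incr.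
Qed.

Lemma above_onP lo s (S : {set 'I_(size s)}) :
  reflect {in S, forall i : 'I_(size s), lo < nth 0 s i} (above_on lo S).
Proof.
apply: (iffP forallP) => [S_above i iS|S_above i]; first by move: (S_above i); rewrite iS.
by apply/implyP; apply: S_above.
Qed.

Section SubsetsOfSucc.
Variable n : nat.

Definition shift_set (S : {set 'I_n}) : {set 'I_n.+1} := [set lift ord0 j | j in S].

Definition cons_set (p : bool * {set 'I_n}) : {set 'I_n.+1} :=
  if p.1 then ord0 |: shift_set p.2 else shift_set p.2.

Lemma lift0_eq0 (j : 'I_n) : (lift ord0 j == ord0) = false.
Proof. by rewrite eq_sym (negbTE (neq_lift _ _)). Qed.

Lemma ord0_shift_setF S : (ord0 \in shift_set S) = false.
Proof. by apply/imsetP => [[j _ /eqP]]; rewrite eq_sym lift0_eq0. Qed.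

Lemma mem_shift_set S j : (lift ord0 j \in shift_set S) = (j \in S).
Proof. by rewrite mem_imset //; apply: lift_inj. Qed.

Lemma card_shift_set S : #|shift_set S| = #|S|.
Proof. by rewrite card_imset //; apply: lift_inj. Qed.

Lemma cons_set_bij : bijective cons_set.
Proof.
exists (fun S : {set 'I_n.+1} => (ord0 \in S, [set j | lift ord0 j \in S])).
  move=> [[] S]; rewrite /cons_set /= ?setU11 ?ord0_shift_setF; congr pair;
    by apply/setP => j; rewrite !inE ?lift0_eq0 mem_shift_set.
move=> S; apply/setP => i; rewrite /cons_set /=.
case: (unliftP ord0 i) => [j ->|->].
  by case: ifP => _; rewrite ?inE ?lift0_eq0 /= mem_shift_set inE.
by case: ifP => S0; rewrite ?setU11 ?ord0_shift_setF ?S0.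
Qed.

End SubsetsOfSucc.

Section ConsSubsets.
Variables (x : nat) (s : seq nat).

Lemma increasing_on_shift_set S :
  @increasing_on (x :: s) (shift_set S) = increasing_on S.
Proof.
apply/increasing_onP/increasing_onP => S_incr.
  move=> i j iS jS; have := S_incr (lift ord0 i) (lift ord0 j).
  by rewrite !mem_shift_set !lift0 ltnS /=; apply.
by move=> _ _ /imsetP [i iS ->] /imsetP [j jS ->]; rewrite !lift0 ltnS /=; apply: S_incr.
Qed.

Lemma above_on_shift_set lo S : @above_on lo (x :: s) (shift_set S) = above_on lo S.
Proof.
apply/above_onP/above_onP => S_above.
  by move=> i iS; have := S_above (lift ord0 i); rewrite mem_shift_set lift0; apply.
by move=> _ /imsetP [i iS ->]; rewrite lift0 /=; apply: S_above.
Qed.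

Lemma increasing_on_cons_set S :
  @increasing_on (x :: s) (ord0 |: shift_set S) = above_on x S && increasing_on S.
Proof.
apply/increasing_onP/andP => [S_incr|[/above_onP S_above /increasing_onP S_incr]].
  split.
    apply/above_onP => i iS; have := S_incr ord0 (lift ord0 i).
    by rewrite setU11 in_setU1 mem_shift_set iS orbT lift0; apply.
  apply/increasing_onP => i j iS jS; have := S_incr (lift ord0 i) (lift ord0 j).
  by rewrite !in_setU1 !mem_shift_set iS jS !orbT !lift0 ltnS; apply.
move=> i j; rewrite !in_setU1.
case/predU1P => [-> | /imsetP [i' i'S ->]] /predU1P [-> | /imsetP [j' j'S ->]] //.
  by rewrite lift0 => _; apply: S_above.
by rewrite !lift0 ltnS; apply: S_incr.
Qed.

Lemma above_on_cons_set lo S :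
  @above_on lo (x :: s) (ord0 |: shift_set S) = (lo < x) && above_on lo S.
Proof.
apply/above_onP/andP => [S_above|[lo_x /above_onP S_above] i].
  split; first exact: (S_above ord0 (setU11 _ _)).
  apply/above_onP => i iS; have := S_above (lift ord0 i).
  by rewrite in_setU1 mem_shift_set iS orbT; apply.
by rewrite in_setU1 => /predU1P [-> // | /imsetP [j jS ->]]; rewrite lift0; apply: S_above.
Qed.

Lemma card_incr_above_cons k lo :
  card_incr_above k.+1 lo (x :: s) =
  (if lo < x then card_incr_above k x s else 0) + card_incr_above k.+1 lo s.
Proof.
rewrite /card_incr_above (reindex (@cons_set (size s))) /=; last first.
  by apply: onW_bij; apply: cons_set_bij.
set F := fun S : {set 'I_(size (x :: s))} =>
  ((#|S| == k.+1) && increasing_on S && above_on lo S : nat).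
rewrite (eq_bigr (fun p => F (cons_set (p.1, p.2)))); last by case.
rewrite -(pair_big xpredT xpredT (fun b S => F (cons_set (b, S)))) big_bool /= /F /=.
congr (_ + _); last first.
  by apply: eq_bigr => S _; rewrite card_shift_set increasing_on_shift_set above_on_shift_set.
case: ifP => lo_x; last by apply: big1 => S _; rewrite above_on_cons_set lo_x andbF.
apply: eq_bigr => S _.
rewrite cardsU1 ord0_shift_setF card_shift_set eqSS increasing_on_cons_set above_on_cons_set lo_x.
case: (boolP (above_on x S)) => [/above_onP x_below | _]; last by rewrite !andbF.
by have -> // : above_on lo S by apply/above_onP => i /x_below; apply: ltn_trans.
Qed.

End ConsSubsets.

Lemma card_incr_above0 lo s : card_incr_above 0 lo s = 1.
Proof.
rewrite /card_incr_above (bigD1 set0) //= cards0 /=.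
have -> : increasing_on (set0 : {set 'I_(size s)}) by apply/forallP => i; rewrite inE.
have -> : above_on lo (set0 : {set 'I_(size s)}) by apply/forallP => i; rewrite inE.
by rewrite big1 // => S S_neq0; rewrite cards_eq0 (negbTE S_neq0).
Qed.

Lemma card_incr_above_nil k lo : card_incr_above k.+1 lo [::] = 0.
Proof.
rewrite /card_incr_above big1 // => S _.
by move: (max_card S); rewrite card_ord leqn0 => /eqP ->.
Qed.

Lemma card_incr_aboveE k lo s : card_incr_above k lo s = n_incr_above k lo s.
Proof.
elim: s k lo => [|x s IHs] [|k] lo;
  by rewrite ?card_incr_above0 ?card_incr_above_nil ?card_incr_above_cons ?IHs.
Qed.

Lemma tau_n_incr_above k s : all [pred x | 0 < x] s -> tau k.+1 s = n_incr_above k.+1 0 s.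
Proof.
move=> /allP s_pos; rewrite -card_incr_aboveE /tau /card_incr_above /=.
rewrite -sum1_card big_mkcond /=; apply: eq_bigr => S _; rewrite inE.
have -> : above_on 0 S by apply/above_onP => i _; apply/s_pos/mem_nth.
by rewrite andbT; case: (_ && _).
Qed.

(* An occurrence of 1243 or of 2143, the order of a and b being left free. *)
Definition occurs_R12 (s : seq nat) : Prop :=
  exists a b c d, subseq [:: a; b; c; d] s /\ a < d /\ b < d /\ d < c.

Lemma order_iso_R12 t p : p \in R12 -> order_iso t p ->
  exists a b c d, t = [:: a; b; c; d] /\ a < d /\ b < d /\ d < c.
Proof.
rewrite /R12 !inE => p_R12 /andP [/eqP size_t /forallP t_p].
have size_p : size p = 4 by case/orP: p_R12 => /eqP ->.
move: size_t t_p; rewrite size_p.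
case: t => [|a [|b [|c [|d [|e t]]]]] //= _ t_p; exists a, b, c, d; split => //.
have := forallP (t_p (@Ordinal 4 0 isT)) (@Ordinal 4 3 isT).
have := forallP (t_p (@Ordinal 4 1 isT)) (@Ordinal 4 3 isT).
have := forallP (t_p (@Ordinal 4 3 isT)) (@Ordinal 4 2 isT).
by case/orP: p_R12 => /eqP -> /= /eqP -> /eqP -> /eqP ->.
Qed.

Lemma order_iso_R12_of a b c d : a < d -> b < d -> d < c -> a != b ->
  exists2 p, p \in R12 & order_iso [:: a; b; c; d] p.
Proof.
move=> ad bd dc; rewrite neq_ltn => /orP ab.
exists (if a < b then [:: 1; 2; 4; 3] else [:: 2; 1; 4; 3]).
  by case: ifP; rewrite !inE eqxx ?orbT.
rewrite /order_iso; case: ifP => a_b /=; apply/forallP => i; apply/forallP => j;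
  case: i => [[|[|[|[|i]]]] Hi] //=; case: j => [[|[|[|[|j]]]] Hj] //=; apply/eqP; lia.
Qed.

Lemma avoids_R12P s : uniq s -> avoids s R12 <-> ~ occurs_R12 s.
Proof.
move=> s_uniq; split=> [s_avoids [a [b [c [d [sub [ad [bd dc]]]]]]] | no_occ p p_R12 [t [sub t_p]]].
  have a_neq_b : a != b by move: (subseq_uniq sub s_uniq); rewrite /= !inE; case: (a == b).
  have [p p_R12 t_p] := order_iso_R12_of ad bd dc a_neq_b.
  by apply: (s_avoids p p_R12); exists [:: a; b; c; d].
have [a [b [c [d [t_eq abcd]]]]] := order_iso_R12 p_R12 t_p.
by apply: no_occ; exists a, b, c, d; rewrite -t_eq.
Qed.

Lemma occurs_R12_subseq s s' : subseq s s' -> occurs_R12 s -> occurs_R12 s'.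
Proof.
move=> ss' [a [b [c [d [sub abcd]]]]]; exists a, b, c, d; split => //.
exact: subseq_trans sub ss'.
Qed.

Lemma subseq_map_inv (f : nat -> nat) t s : subseq t (map f s) ->
  exists2 t', t = map f t' & subseq t' s.
Proof.
by case/subseqP => m size_m ->; exists (mask m s); rewrite ?map_mask ?mask_subseq.
Qed.

Lemma occurs_R12_map (P : pred nat) (f : nat -> nat) s :
  {in P &, {mono f : x y / x < y}} -> all P s -> occurs_R12 (map f s) -> occurs_R12 s.
Proof.
move=> f_mono /allP s_P [a [b [c [d [/subseq_map_inv [t t_eq sub] [ad [bd dc]]]]]]].
case: t t_eq sub => [|a' [|b' [|c' [|d' [|e' t]]]]] //= [ea eb ec ed] sub; subst.
have P_of y : y \in [:: a'; b'; c'; d'] -> P y by move=> /(mem_subseq sub) /s_P.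
exists a', b', c', d'; split => //.
have [Pa Pb Pc Pd] : [/\ P a', P b', P c' & P d'] by split; apply: P_of; rewrite !inE eqxx ?orbT.
by rewrite -(f_mono _ _ Pa Pd) -(f_mono _ _ Pb Pd) -(f_mono _ _ Pd Pc).
Qed.

Lemma subseq_catP (t A B : seq nat) : subseq t (A ++ B) ->
  exists t1 t2, [/\ t = t1 ++ t2, subseq t1 A & subseq t2 B].
Proof.
case/subseqP => m size_m ->.
exists (mask (take (size A) m) A), (mask (drop (size A) m) B).
split; rewrite ?mask_subseq // -mask_cat ?cat_take_drop // size_take.
move: size_m; rewrite size_cat; case: ltnP => // m_le m_eq.
by apply/eqP; rewrite eqn_leq m_le m_eq leq_addr.
Qed.

Lemma subseq_pair (x y : nat) s : x \in s -> y \in s -> x != y ->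
  subseq [:: x; y] s \/ subseq [:: y; x] s.
Proof.
elim: s => [//|w s IHs]; rewrite !inE => xs ys x_neq_y.
case: (eqVneq x w) => [x_eq_w|x_neq_w].
  by subst w; left; rewrite /= eqxx sub1seq; move: ys; rewrite eq_sym (negbTE x_neq_y).
case: (eqVneq y w) => [y_eq_w|y_neq_w].
  by subst w; right; rewrite /= eqxx sub1seq; move: xs; rewrite (negbTE x_neq_w).
move: xs ys; rewrite (negbTE x_neq_w) (negbTE y_neq_w) /= => xs ys.
by case: (IHs xs ys x_neq_y) => sub; [left|right]; apply: subseq_trans sub (subseq_cons _ _).
Qed.

Section StarBlocks.
Variables (m h N : nat) (C : seq nat).
Hypotheses (h_le_m : h <= m) (m_lt_N : m < N) (C_le_m : {in C, forall y, y <= m}).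

Lemma n_incr_above_star A : uniq A -> all [pred x | (x == h) || (m < x < N)] A ->
  forall k lo, lo < N ->
  n_incr_above k.+1 lo (A ++ N :: C) =
    n_incr_above k.+1 lo A + n_incr_above k lo A + n_incr_above k.+1 lo C +
    (if (h \in A) && (lo < h) && (0 < k) then n_incr_above k h C else 0).
Proof.
have C_le_N : {in C, forall y, y <= N} by move=> y /C_le_m; lia.
elim: A => [|x A IHA] /= A_uniq A_shape k lo lo_N.
  rewrite lo_N add0n; case: k => [|k]; first by rewrite !n_incr_above0 addn0.
  by rewrite n_incr_above_le // addn0.
case/andP: A_uniq => x_notin_A A_uniq; case/andP: A_shape => x_shape A_shape.
have x_lt_N : x < N by case/orP: x_shape => [/eqP ->|/andP []]; lia.
rewrite IHA //; case: k => [|k]; first by rewrite !n_incr_above0 !andbF; lia.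
rewrite [n_incr_above k.+1 x _]IHA // in_cons.
case/orP: x_shape => [/eqP x_eq_h | /andP [m_lt_x _]].
  subst x; rewrite eqxx (negbTE x_notin_A) /=; case: (lo < h) => /=; lia.
have -> : n_incr_above k.+1 x C = 0 by apply: n_incr_above_le => y /C_le_m; lia.
have -> : (x < h) = false by lia.
have -> : (h == x) = false by apply/eqP; lia.
by rewrite andbF /=; case: (lo < x) => /=; lia.
Qed.

Lemma occurs_R12_star A : all [pred x | (x == h) || (m < x < N)] A ->
  uniq (A ++ N :: C) -> occurs_R12 (A ++ N :: C) -> occurs_R12 A \/ occurs_R12 (h :: C).
Proof.
move=> /allP A_shape s_uniq [a [b [c [d [sub [ad [bd dc]]]]]]].
have a_neq_b : a != b by move: (subseq_uniq sub s_uniq); rewrite /= !inE; case: (a == b).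
have low_in_A z : z \in A -> z <= m -> z = h.
  by move=> /A_shape /orP [/eqP // | /andP [m_lt_z _]]; lia.
have c_le_N : c <= N.
  have : c \in A ++ N :: C by apply: (mem_subseq sub); rewrite !inE eqxx !orbT.
  by rewrite mem_cat inE => /or3P [/A_shape /orP [/eqP ->|/andP [_ /ltnW //]] | /eqP -> | /C_le_m];
    lia.
case/subseq_catP: sub => t1 [t2 [t_eq sub1 sub2]].
have d_in_C : d \in t2 -> d \in C.
  by move=> /(mem_subseq sub2); rewrite inE => /predU1P [d_eq_N|//]; lia.
have below_d_in_A z : z \in t1 -> z < d -> d \in C -> z = h.
  by move=> /(mem_subseq sub1) zA zd /C_le_m d_le_m; apply: low_in_A => //; lia.
case: t1 t_eq sub1 below_d_in_A => [|a1 [|b1 [|c1 [|d1 [|e1 t1]]]]] //= t_eq sub1 below_d_in_A.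
- subst t2; right; exists a, b, c, d; split => //.
  apply: subseq_trans (subseq_cons _ _).
  by move: sub2; rewrite /= [a == _]eq_sym; case: eqP => // a_eq_N; lia.
- case: t_eq => ea t2_eq; subst a1 t2; right; exists a, b, c, d; split => //.
  have dC : d \in C by apply: d_in_C; rewrite !inE eqxx !orbT.
  rewrite (below_d_in_A a (mem_head _ _) ad dC) /= eqxx.
  by move: sub2; rewrite /= [b == _]eq_sym; case: eqP => // b_eq_N; lia.
- case: t_eq => ea eb t2_eq; subst a1 b1 t2.
  have dC : d \in C by apply: d_in_C; rewrite !inE eqxx orbT.
  have b_in : b \in [:: a; b] by rewrite !inE eqxx orbT.
  by rewrite (below_d_in_A a (mem_head _ _) ad dC) (below_d_in_A b b_in bd dC) eqxx in a_neq_b.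
- case: t_eq => ea eb ec t2_eq; subst a1 b1 c1 t2.
  have dC : d \in C by apply: d_in_C; rewrite !inE eqxx.
  have b_in : b \in [:: a; b; c] by rewrite !inE eqxx orbT.
  by rewrite (below_d_in_A a (mem_head _ _) ad dC) (below_d_in_A b b_in bd dC) eqxx in a_neq_b.
- by case: t_eq => ea eb ec ed _; subst a1 b1 c1 d1; left; exists a, b, c, d.
Qed.

Lemma uniq_star_blocks A : all [pred x | (x == h) || (m < x < N)] A ->
  uniq A -> h \notin C -> uniq C -> uniq (A ++ N :: C).
Proof.
move=> /allP A_shape A_uniq h_notin_C C_uniq.
have N_notin_C : N \notin C by apply/negP => /C_le_m; lia.
rewrite cat_uniq A_uniq /= N_notin_C C_uniq /= andbT; apply/norP; split.
  by apply/negP => /A_shape /orP [/eqP|/andP []]; lia.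
apply/hasPn => y yC; apply/negP => /A_shape /orP [/eqP y_eq_h|/andP [m_lt_y _]].
  by rewrite -y_eq_h yC in h_notin_C.
by have := C_le_m yC; lia.
Qed.

End StarBlocks.

Lemma is_permP n s :
  is_perm n s <-> [/\ uniq s, size s = n & {in s, forall x, 0 < x <= n}].
Proof.
split=> [s_perm | [s_uniq size_s s_range]].
  split; [by rewrite (perm_uniq s_perm) iota_uniq | by rewrite (perm_size s_perm) size_iota |].
  by move=> x; rewrite (perm_mem s_perm) mem_iota; lia.
apply: uniq_perm; rewrite ?iota_uniq //.
have [] // := uniq_min_size s_uniq (s2 := iota 1 n); last by rewrite size_iota size_s.
by move=> x /s_range; rewrite mem_iota; lia.
Qed.

Lemma is_perm_cat_low n s t : is_perm n (s ++ t) -> {in s & t, forall y x, y < x} ->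
  is_perm (size s) s.
Proof.
move=> /is_permP [st_uniq size_st st_range] s_below_t.
rewrite cat_uniq in st_uniq; case/and3P: st_uniq => s_uniq _ t_uniq.
apply/is_permP; split => // y ys.
have y_range : 0 < y <= n by apply: st_range; rewrite mem_cat ys.
have : size t <= size (iota y.+1 (n - y)).
  apply: uniq_leq_size => // x xt; rewrite mem_iota.
  have := st_range x; rewrite mem_cat xt orbT => /(_ isT).
  by have := s_below_t y x ys xt; lia.
by rewrite size_iota; move: size_st; rewrite size_cat; lia.
Qed.

Definition relabel (m h x : nat) : nat :=
  if x + (m - 1) == m then h else x + (m - 1).

Definition unrelabel (m h x : nat) : nat := if x == h then 1 else x - (m - 1).

Lemma star_cat p1 p2 :
  star p1 p2 = map (relabel (size p2) (head 0 p2)) p1 ++ (size p1 + size p2) :: behead p2.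
Proof. by []. Qed.

Section Relabel.
Variables (m h : nat).
Hypotheses (m_pos : 0 < m) (h_range : 0 < h <= m).

Lemma relabel1 : relabel m h 1 = h.
Proof. by rewrite /relabel; case: ifP => // /eqP; lia. Qed.

Lemma relabel_mono : {in [pred x | 0 < x] &, {mono relabel m h : x y / x < y}}.
Proof.
apply/leqW_mono_in/leq_mono_in => x y; rewrite !inE /relabel => x_pos y_pos.
by case: eqP; case: eqP; lia.
Qed.

Lemma relabel_inj : {in [pred x | 0 < x] &, injective (relabel m h)}.
Proof.
by apply/incn_inj_in/leq_mono_in => x y x_pos y_pos; rewrite relabel_mono.
Qed.

Lemma relabel_range i x : 0 < x <= i ->
  (relabel m h x == h) || (m < relabel m h x < i + m).
Proof.
move=> /andP [x_pos x_le_i]; rewrite /relabel; case: ifP => [_|/eqP x_neq]; rewrite ?eqxx //.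
by apply/orP; right; apply/andP; split; lia.
Qed.

Lemma relabelK : {in [pred x | (x == h) || (m < x)], cancel (unrelabel m h) (relabel m h)}.
Proof.
move=> x; rewrite inE /unrelabel; case: eqP => [-> _|_ /= m_lt_x]; first exact: relabel1.
by rewrite /relabel; case: ifP => /eqP; lia.
Qed.

Lemma unrelabel_mono :
  {in [pred x | (x == h) || (m < x)] &, {mono unrelabel m h : x y / x < y}}.
Proof.
move=> x y; rewrite !inE /unrelabel.
by case: (eqVneq x h) => [->|_]; case: (eqVneq y h) => [->|_] //=; lia.
Qed.

Lemma unrelabel_inj : {in [pred x | (x == h) || (m < x)] &, injective (unrelabel m h)}.
Proof. by apply/incn_inj_in/leq_mono_in => x y xP yP; rewrite unrelabel_mono. Qed.

End Relabel.

Lemma star_blocks i m p1 p2 : 0 < m -> is_perm i p1 -> is_perm m p2 ->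
  [/\ star p1 p2 = map (relabel m (head 0 p2)) p1 ++ (i + m) :: behead p2,
      p2 = head 0 p2 :: behead p2, 0 < head 0 p2 <= m,
      uniq (map (relabel m (head 0 p2)) p1) &
      all [pred x | (x == head 0 p2) || (m < x < i + m)] (map (relabel m (head 0 p2)) p1)].
Proof.
move=> m_pos /is_permP [p1_uniq size_p1 p1_range] /is_permP [_ size_p2 p2_range].
have p2_eq : p2 = head 0 p2 :: behead p2.
  by case: p2 size_p2 {p2_range} => //= m0; rewrite -m0 in m_pos.
have h_range : 0 < head 0 p2 <= m by apply: p2_range; rewrite p2_eq mem_head.
split => //; first by rewrite star_cat size_p1 size_p2.
  rewrite map_inj_in_uniq // => x y /p1_range /andP [x_pos _] /p1_range /andP [y_pos _].
  exact: relabel_inj.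
by apply/allP => _ /mapP [x /p1_range x_range ->]; apply: relabel_range.
Qed.

Lemma in_Sav_star i m p1 p2 : 0 < i -> 0 < m -> in_Sav i R12 p1 -> in_Sav m R12 p2 ->
  in_Sav (i + m) R12 (star p1 p2) /\ nth 0 (star p1 p2) i = i + m.
Proof.
move=> i_pos m_pos [P1 avoid1] [P2 avoid2].
have [star_eq p2_eq h_range A_uniq A_shape] := star_blocks m_pos P1 P2.
have [p1_uniq size_p1 p1_range] := (is_permP i p1).1 P1.
have [p2_uniq size_p2 p2_range] := (is_permP m p2).1 P2.
move: star_eq p2_eq h_range A_uniq A_shape.
set h := head 0 p2; set C := behead p2; set A := map _ p1.
move=> star_eq p2_eq h_range A_uniq A_shape.
have C_le_m : {in C, forall y, y <= m}.
  by move=> y yC; have /andP [] : 0 < y <= m by apply: p2_range; rewrite p2_eq inE yC orbT.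
have [h_notin_C C_uniq] : h \notin C /\ uniq C by apply/andP; move: p2_uniq; rewrite p2_eq.
have m_lt_N : m < i + m by rewrite -addn1 addnC leq_add2r.
have h_le_m : h <= m by case/andP: h_range.
have star_uniq : uniq (star p1 p2).
  by rewrite star_eq (uniq_star_blocks h_le_m m_lt_N C_le_m A_shape).
split; last by rewrite star_eq nth_cat size_map size_p1 ltnn subnn.
split.
  apply/is_permP; split => //.
    by rewrite star_eq size_cat size_map /= -size_p2 p2_eq /=; lia.
  move=> x; rewrite star_eq mem_cat inE => /or3P [/(allP A_shape) | /eqP -> | xC].
  - by rewrite inE => /orP [/eqP -> | /andP []]; lia.
  - lia.
  - by have := p2_range x; rewrite p2_eq inE xC orbT => /(_ isT); lia.
apply/(avoids_R12P star_uniq); rewrite star_eq.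
case/(occurs_R12_star h_le_m m_lt_N C_le_m A_shape); rewrite -?star_eq //.
- have p1_pos : all [pred x | 0 < x] p1 by apply/allP => x /p1_range /andP [].
  by move=> /(occurs_R12_map (relabel_mono m_pos h_range) p1_pos); apply: (avoids_R12P p1_uniq).1.
- by rewrite -p2_eq; apply: (avoids_R12P p2_uniq).1 avoid2.
Qed.

Lemma star_inj i m p1 p2 q1 q2 : 0 < m ->
  is_perm i p1 -> is_perm m p2 -> is_perm i q1 -> is_perm m q2 ->
  star p1 p2 = star q1 q2 -> p1 = q1 /\ p2 = q2.
Proof.
move=> m_pos P1 P2 Q1 Q2.
have [-> p2_eq p2_head _ _] := star_blocks m_pos P1 P2.
have [-> q2_eq _ _ _] := star_blocks m_pos Q1 Q2.
have [_ size_p1 p1_range] := (is_permP i p1).1 P1.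
have [_ size_q1 q1_range] := (is_permP i q1).1 Q1.
move/eqP; rewrite eqseq_cat ?size_map ?size_p1 ?size_q1 // => /andP [/eqP A_eq /eqP [C_eq]].
have h_eq : head 0 p2 = head 0 q2.
  have : perm_eq ([:: head 0 p2] ++ behead p2) ([:: head 0 q2] ++ behead q2).
    by rewrite /= -p2_eq -q2_eq (perm_trans P2) // perm_sym.
  by rewrite C_eq perm_cat2r => /perm_mem /(_ (head 0 p2)); rewrite !inE eqxx => /esym /eqP.
have p2_eq_q2 : p2 = q2 by rewrite p2_eq q2_eq h_eq C_eq.
split => //; rewrite h_eq in A_eq p2_head.
apply: (inj_in_map (relabel_inj m_pos p2_head)) A_eq; apply/allP.
  by move=> x /p1_range /andP [].
by move=> x /q1_range /andP [].
Qed.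

Lemma occurs_R12_cat_max A N C x y z : x \in A -> y \in A -> x != y -> z \in C ->
  x < z -> y < z -> z < N -> occurs_R12 (A ++ N :: C).
Proof.
move=> xA yA x_neq_y zC xz yz zN.
have sub_Nz : subseq [:: N; z] (N :: C) by rewrite /= eqxx sub1seq.
case: (subseq_pair xA yA x_neq_y) => sub_xy.
  by exists x, y, N, z; rewrite (cat_subseq sub_xy sub_Nz).
by exists y, x, N, z; rewrite (cat_subseq sub_xy sub_Nz).
Qed.

Lemma R12_avoiding_blocks i m A C : 0 < i -> 0 < m -> size A = i ->
  is_perm (i + m) (A ++ (i + m) :: C) -> ~ occurs_R12 (A ++ (i + m) :: C) ->
  exists2 h, h \in A & is_perm m (h :: C) /\ all [pred x | (x == h) || (m < x < i + m)] A.
Proof.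
set N := i + m => i_pos m_pos size_A P no_occ.
have [pi_uniq size_pi pi_range] := (is_permP _ _).1 P.
move: pi_uniq; rewrite cat_uniq /=.
case/and4P => A_uniq /norP [N_notin_A /hasPn C_notin_A] N_notin_C _.
have A_range x : x \in A -> 0 < x < N.
  move=> xA; have x_neq_N : x <> N by move=> x_eq; rewrite -x_eq xA in N_notin_A.
  by have := pi_range x; rewrite mem_cat xA => /(_ isT); lia.
have C_range z : z \in C -> 0 < z < N.
  move=> zC; have z_neq_N : z <> N by move=> z_eq; rewrite -z_eq zC in N_notin_C.
  by have := pi_range z; rewrite mem_cat inE zC !orbT => /(_ isT); lia.
have [h hA h_min] : exists2 h, h \in A & {in A, forall x, h <= x}.
  have A_nonempty : exists x, x \in A by exists (nth 0 A 0); rewrite mem_nth // size_A.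
  by case: (ex_minnP A_nonempty) => h hA h_min; exists h.
have C_below x z : x \in A -> z \in C -> x != h -> z < x.
  move=> xA zC x_neq_h; rewrite ltnNge leq_eqVlt negb_or; apply/andP; split.
    by apply/eqP => x_eq_z; move: (C_notin_A z zC); rewrite -x_eq_z xA.
  apply/negP => x_lt_z; apply: no_occ.
  apply: (occurs_R12_cat_max hA xA _ zC) => //; first by rewrite eq_sym.
  - exact: leq_ltn_trans (h_min x xA) x_lt_z.
  - by case/andP: (C_range z zC).
have h_below x : x \in A -> x != h -> h < x.
  by move=> xA x_neq_h; rewrite ltn_neqAle eq_sym x_neq_h h_min.
set D := rem h A.
have mem_D x : (x \in D) = (x != h) && (x \in A) by rewrite mem_rem_uniq // inE.
have hC_perm : is_perm m (h :: C).
  have -> : m = size (h :: C) by move: size_pi; rewrite size_cat /= size_A; lia.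
  apply: (@is_perm_cat_low N _ (N :: D)).
    apply: perm_trans P; apply/permP => a.
    by rewrite !count_cat (permP (perm_to_rem hA)) /= -/D; lia.
  move=> y x yhC; rewrite inE => /predU1P [-> | ].
    by move: yhC; rewrite inE => /predU1P [-> | /C_range /andP []]; case/andP: (A_range h hA).
  rewrite mem_D => /andP [x_neq_h xA].
  by move: yhC; rewrite inE => /predU1P [-> | yC]; [apply: h_below | apply: C_below].
exists h => //; split => //.
apply/allP => x xA; rewrite inE; case: eqP => //= /eqP x_neq_h.
rewrite (proj2 (andP (A_range x xA))) andbT.
have : m \in h :: C by rewrite (perm_mem hC_perm) mem_iota; lia.
by rewrite inE => /predU1P [-> | mC]; [apply: h_below | apply: C_below].
Qed.

Lemma star_surj i m pi : 0 < i -> 0 < m -> in_Sav (i + m) R12 pi -> nth 0 pi i = i + m ->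
  exists p1 p2, [/\ in_Sav i R12 p1, in_Sav m R12 p2 & star p1 p2 = pi].
Proof.
move=> i_pos m_pos [P avoid] pi_i.
have [pi_uniq size_pi _] := (is_permP _ pi).1 P.
have no_occ := (avoids_R12P pi_uniq).1 avoid.
set A := take i pi; set C := drop i.+1 pi.
have pi_eq : pi = A ++ (i + m) :: C.
  by rewrite -{1}(cat_take_drop i pi) (drop_nth 0) ?pi_i // size_pi; lia.
have size_A : size A = i by rewrite size_takel // size_pi leq_addr.
rewrite pi_eq in P no_occ *.
have [h hA [hC_perm A_shape]] := R12_avoiding_blocks i_pos m_pos size_A P no_occ.
have [hC_uniq size_hC _] := (is_permP m _).1 hC_perm.
have h_range : 0 < h <= m by move: (mem_head h C); rewrite (perm_mem hC_perm) mem_iota; lia.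
have A_low : all [pred x | (x == h) || (m < x)] A.
  by apply: sub_all A_shape => x /orP [x_eq_h | /andP [m_lt_x _]];
    rewrite inE ?x_eq_h ?m_lt_x ?orbT.
have p1_uniq : uniq (map (unrelabel m h) A).
  have [A_uniq _ _] := (is_permP _ _).1 P; move: A_uniq; rewrite cat_uniq => /andP [A_uniq _].
  by rewrite map_inj_in_uniq //; apply: sub_in2 (unrelabel_inj m_pos h_range) => x /(allP A_low).
exists (map (unrelabel m h) A), (h :: C); split.
- split.
    apply/is_permP; split; rewrite ?size_map // => _ /mapP [x xA ->].
    rewrite /unrelabel; case: eqP => // x_neq_h.
    by have := allP A_shape x xA; rewrite inE => /orP [/eqP | /andP []]; lia.
  apply: (avoids_R12P p1_uniq).2 => /(occurs_R12_map (unrelabel_mono m_pos h_range) A_low).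
  by apply: contra_not no_occ; apply: occurs_R12_subseq (prefix_subseq _ _).
- split => //; apply: (avoids_R12P hC_uniq).2 => occ; apply/no_occ/(occurs_R12_subseq _ occ).
  by rewrite -cat1s; apply: cat_subseq; rewrite ?sub1seq ?subseq_cons.
- rewrite star_cat size_map size_A size_hC; congr (_ ++ _).
  exact: (mapK_in (relabelK m_pos h_range)).
Qed.

Lemma tau_star i m k p1 p2 : 0 < i -> 0 < m -> 0 < k ->
  is_perm i p1 -> is_perm m p2 -> tau k (star p1 p2) = tau k p1 + tau k.-1 p1 + tau k p2.
Proof.
move=> i_pos m_pos k_pos P1 P2.
have [star_eq p2_eq h_range A_uniq A_shape] := star_blocks m_pos P1 P2.
have [_ _ p1_range] := (is_permP i p1).1 P1.
have [_ _ p2_range] := (is_permP m p2).1 P2.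
move: star_eq p2_eq h_range A_uniq A_shape.
set h := head 0 p2; set C := behead p2; set A := map _ p1.
move=> star_eq p2_eq h_range A_uniq A_shape; case/andP: (h_range) => h_pos h_le_m.
have C_le_m : {in C, forall y, y <= m}.
  by move=> y yC; have /andP [] : 0 < y <= m by apply: p2_range; rewrite p2_eq inE yC orbT.
have p1_pos : all [pred x | 0 < x] p1 by apply/allP => x /p1_range /andP [].
have p2_pos : all [pred x | 0 < x] p2 by apply/allP => x /p2_range /andP [].
have star_pos : all [pred x | 0 < x] (star p1 p2).
  apply/allP => x; rewrite star_eq mem_cat in_cons => /or3P [/(allP A_shape) | /eqP -> | xC].
  - by rewrite !inE => /orP [/eqP -> | /andP []] //; lia.
  - by rewrite inE addn_gt0 i_pos.
  - by have := allP p2_pos x; rewrite p2_eq in_cons xC orbT; apply.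
have h_in_A : h \in A.
  by apply/mapP; exists 1; rewrite ?relabel1 // (perm_mem P1) mem_iota; lia.
have A_count j : n_incr_above j 0 A = n_incr_above j 0 p1.
  symmetry; apply: (n_incr_above_map (P := [pred x | 0 < x])) => //.
    exact: relabel_mono.
  by move=> x; rewrite inE => x_pos; rewrite x_pos /relabel; case: ifP => _; lia.
have m_lt_N : m < i + m by rewrite -addn1 addnC leq_add2r.
case: k k_pos => // k _; rewrite !tau_n_incr_above // star_eq.
rewrite (n_incr_above_star h_le_m m_lt_N C_le_m A_uniq A_shape) ?addn_gt0 ?i_pos //.
rewrite !A_count p2_eq /= h_in_A h_pos /=.
by case: k => [|k]; rewrite ?tau_n_incr_above ?n_incr_above0 //= /tau /=; lia.
Qed.

Theorem mainTheorem9 (n i : nat) (hi1 : 1 <= i) (hi2 : i <= n - 1) :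
  (* well-defined into the target set *)
  (forall p1 p2, in_Sav i R12 p1 -> in_Sav (n - i) R12 p2 ->
     in_Sav n R12 (star p1 p2) /\ nth 0 (star p1 p2) i = n) /\
  (* injective *)
  (forall p1 p2 q1 q2, in_Sav i R12 p1 -> in_Sav (n - i) R12 p2 ->
     in_Sav i R12 q1 -> in_Sav (n - i) R12 q2 ->
     star p1 p2 = star q1 q2 -> p1 = q1 /\ p2 = q2) /\
  (* surjective onto {pi in S_n(R) | pi(i+1) = n} *)
  (forall pi, in_Sav n R12 pi -> nth 0 pi i = n ->
     exists p1 p2, in_Sav i R12 p1 /\ in_Sav (n - i) R12 p2 /\ star p1 p2 = pi) /\
  (* tau identity *)
  (forall k p1 p2, 1 <= k -> in_Sav i R12 p1 -> in_Sav (n - i) R12 p2 ->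
     tau k (star p1 p2) = tau k p1 + tau k.-1 p1 + tau k p2).
Proof.
have m_pos : 0 < n - i by lia.
have n_eq : i + (n - i) = n by lia.
move: (n - i) m_pos n_eq => m m_pos <-.
split; first by move=> p1 p2; apply: in_Sav_star.
split; first by move=> p1 p2 q1 q2 [P1 _] [P2 _] [Q1 _] [Q2 _]; apply: star_inj m_pos P1 P2 Q1 Q2.
split; last by move=> k p1 p2 k_pos [P1 _] [P2 _]; apply: tau_star hi1 m_pos k_pos P1 P2.
move=> pi P pi_i; have [p1 [p2 [P1 P2 pi_eq]]] := star_surj hi1 m_pos P pi_i.
by exists p1, p2.
Qed.
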